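(* The real vector space with basis $J,H,G_a,P_a,J_a,H_a,G_{ab},P_{ab},J^*,H^*,J^*_a,H^*_a$ with the following nonzero brackets is a Lie algebra (the double extension of $\operatorname{span}\{P_a,G_a,P_{ab},G_{ab}\}$ by $\operatorname{span}\{H,J,H_a,J_a\}$): $[J,G_a]=\epsilon_{am}G_m$, $[J,P_a]=\epsilon_{am}P_m$, $[G_a,H]=-\epsilon_{am}P_m$, $[G_a,G_b]=\epsilon_{ab}H^*$, $[P_a,G_b]=\epsilon_{ab}J^*$; $[J,J_a]=\epsilon_{am}J_m$, $[J,G_{ab}]=-\epsilon_{m(a}G_{b)m}$, $[J,H_a]=\epsilon_{am}H_m$, $[J,P_{ab}]=-\epsilon_{m(a}P_{b)m}$, $[G_a,J_b]=-(\epsilon_{am}G_{bm}+\epsilon_{ab}G_{mm})$, $[G_a,H_b]=-(\epsilon_{am}P_{bm}+\epsilon_{ab}P_{mm})$, $[H,J_a]=\epsilon_{am}H_m$, $[H,G_{ab}]=-\epsilon_{m(a}P_{b)m}$, $[P_a,J_b]=-(\epsilon_{am}P_{bm}+\epsilon_{ab}P_{mm})$; $[J_a,J_b]=\epsilon_{ab}J$, $[J_a,G_{bc}]=\delta_{a(b}\epsilon_{c)m}G_m$, $[J_a,H_b]=\epsilon_{ab}H$, $[J_a,P_{bc}]=\delta_{a(b}\epsilon_{c)m}P_m$, $[G_{ab},H_c]=-\delta_{c(a}\epsilon_{b)m}P_m$; $[G_{ab},G_{cd}]=\epsilon_{(a(c}\delta_{d)b)}H^*$, $[P_{ab},G_{cd}]=\epsilon_{(a(c}\delta_{d)b)}J^*$,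 $[P_a,G_{bc}]=\epsilon_{a(b}J^*_{c)}$, $[G_a,G_{bc}]=\epsilon_{a(b}H^*_{c)}$, $[G_a,P_{bc}]=\epsilon_{a(b}J^*_{c)}$; $[J,H^*_a]=\epsilon_{am}H^*_m$, $[J,J^*_a]=\epsilon_{am}J^*_m$, $[H,H^*_a]=\epsilon_{am}J^*_m$, $[J_a,J^*]=-\epsilon_{am}J^*_m$, $[J_a,H^*]=-\epsilon_{am}H^*_m$, $[J_a,J^*_b]=\epsilon_{ab}J^*$, $[J_a,H^*_b]=\epsilon_{ab}H^*$, $[H_a,H^*]=-\epsilon_{am}J^*_m$, $[H_a,H^*_b]=\epsilon_{ab}J^*$. It admits the invariant metric with nonzero entries $\langle P_a,G_b\rangle=\delta_{ab}$, $\langle P_{ab},G_{cd}\rangle=\delta_{a(c}\delta_{d)b}-\tfrac23\delta_{ab}\delta_{cd}$, $\langle H,H^*\rangle=1$, $\langle J,J^*\rangle=1$, $\langle H_a,H^*_b\rangle=\delta_{ab}$, $\langle J_a,J^*_b\rangle=\delta_{ab}$. The subspace $\operatorname{span}\{H,J,P_a,G_a,H^*,J^*\}$ is a subalgebra isomorphic to the Extended Bargmann algebra.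
   Context: Indices $a,b,c,d,m\in\{1,2\}$, summed when repeated, $\epsilon_{12}=1$; $G_{ab},P_{ab}$ symmetric. Symmetrization without normalization ($T_{(ab)}=T_{ab}+T_{ba}$, nested from outermost to innermost). An invariant metric is a symmetric nondegenerate bilinear form with $\langle[Z,X],Y\rangle+\langle X,[Z,Y]\rangle=0$. The Extended Bargmann algebra has basis $J,H,G_a,P_a,J^*,H^*$ and nonzero brackets $[J,G_a]=\epsilon_{am}G_m$, $[J,P_a]=\epsilon_{am}P_m$, $[G_a,G_b]=\epsilon_{ab}H^*$, $[G_a,H]=-\epsilon_{am}P_m$, $[G_a,P_b]=\epsilon_{ab}J^*$. *)

From HB Require Import structures.
From mathcomp Require Import all_boot all_order all_algebra.
Set Implicit Arguments. Unset Strict Implicit. Unset Printing Implicit Defensive.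
Import Order.TTheory GRing.Theory Num.Theory.
Local Open Scope ring_scope.

(* Generators of the 22-dimensional algebra.  gGs a b / gPs a b are the
   symmetric generators G_ab / P_ab (gGs a b and gGs b a denote the same
   basis vector); gJs, gHs are J^*, H^*; gJsa a, gHsa a are J^*_a, H^*_a. *)
Inductive gen :=
  | gJ | gH | gG of 'I_2 | gP of 'I_2 | gJa of 'I_2 | gHa of 'I_2
  | gGs of 'I_2 & 'I_2 | gPs of 'I_2 & 'I_2
  | gJs | gHs | gJsa of 'I_2 | gHsa of 'I_2.

(* index of the symmetric pair {a,b} among 11,12,22 *)
Definition symidx (a b : 'I_2) : nat := (nat_of_ord a + nat_of_ord b)%N.

Definition idx (g : gen) : 'I_22 :=
  match g with
  | gJ => inord 0 | gH => inord 1
  | gG a => inord (2 + a) | gP a => inord (4 + a)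
  | gJa a => inord (6 + a) | gHa a => inord (8 + a)
  | gGs a b => inord (10 + symidx a b) | gPs a b => inord (13 + symidx a b)
  | gJs => inord 16 | gHs => inord 17
  | gJsa a => inord (18 + a) | gHsa a => inord (20 + a)
  end.

Definition i2 (k : nat) : 'I_2 := inord k.
Definition symgen (f : 'I_2 -> 'I_2 -> gen) (s : nat) : gen :=
  f (i2 (s %/ 2)) (i2 (minn s 1)).

Definition dec (i : 'I_22) : gen :=
  let k := nat_of_ord i in
  if k == 0%N then gJ else if k == 1%N then gH
  else if (k < 4)%N then gG (i2 (k - 2))
  else if (k < 6)%N then gP (i2 (k - 4))
  else if (k < 8)%N then gJa (i2 (k - 6))
  else if (k < 10)%N then gHa (i2 (k - 8))
  else if (k < 13)%N then symgen gGs (k - 10)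
  else if (k < 16)%N then symgen gPs (k - 13)
  else if k == 16%N then gJs else if k == 17%N then gHs
  else if (k < 20)%N then gJsa (i2 (k - 18))
  else gHsa (i2 (k - 20)).

Inductive egen := eJ | eH | eG of 'I_2 | eP of 'I_2 | eJs | eHs.

Definition eidx (g : egen) : 'I_8 :=
  match g with
  | eJ => inord 0 | eH => inord 1 | eG a => inord (2 + a) | eP a => inord (4 + a)
  | eJs => inord 6 | eHs => inord 7
  end.

Definition edec (i : 'I_8) : egen :=
  let k := nat_of_ord i in
  if k == 0%N then eJ else if k == 1%N then eH
  else if (k < 4)%N then eG (i2 (k - 2))
  else if (k < 6)%N then eP (i2 (k - 4))
  else if k == 6%N then eJs else eHs.

Section Algebra.
Variable R : realFieldType.

Definition eps (a b : 'I_2) : R :=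
  if a == b then 0 else if a == ord0 then 1 else -1.
Definition delta (a b : 'I_2) : R := (a == b)%:R.

Definition bil n (f : 'I_n -> 'I_n -> 'rV[R]_n) (x y : 'rV[R]_n) : 'rV[R]_n :=
  \sum_(i < n) \sum_(j < n) (x 0 i * y 0 j) *: f i j.
Definition bilf n (f : 'I_n -> 'I_n -> R) (x y : 'rV[R]_n) : R :=
  \sum_(i < n) \sum_(j < n) x 0 i * y 0 j * f i j.

Definition antisym_ext T (V : zmodType) (t : T -> T -> option V) (x y : T) : V :=
  match t x y with
  | Some v => v
  | None => match t y x with Some v => - v | None => 0 end
  end.
Definition sym_ext T (t : T -> T -> option R) (x y : T) : R :=
  match t x y with
  | Some v => v
  | None => match t y x with Some v => v | None => 0 end
  end.

Definition e (g : gen) : 'rV[R]_22 := delta_mx 0 (idx g).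

(* eps_{(a(c} delta_{d)b)} *)
Definition epsdel (a b c d : 'I_2) : R :=
  eps a c * delta d b + eps a d * delta c b + eps b c * delta d a + eps b d * delta c a.

Definition tbl (x y : gen) : option 'rV[R]_22 :=
  match x, y with
  | gJ, gG a => Some (\sum_(m < 2) eps a m *: e (gG m))
  | gJ, gP a => Some (\sum_(m < 2) eps a m *: e (gP m))
  | gG a, gH => Some (- \sum_(m < 2) eps a m *: e (gP m))
  | gG a, gG b => Some (eps a b *: e gHs)
  | gP a, gG b => Some (eps a b *: e gJs)
  | gJ, gJa a => Some (\sum_(m < 2) eps a m *: e (gJa m))
  | gJ, gGs a b => Some (- \sum_(m < 2) (eps m a *: e (gGs b m) + eps m b *: e (gGs a m)))
  | gJ, gHa a => Some (\sum_(m < 2) eps a m *: e (gHa m))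
  | gJ, gPs a b => Some (- \sum_(m < 2) (eps m a *: e (gPs b m) + eps m b *: e (gPs a m)))
  | gG a, gJa b => Some (- \sum_(m < 2) (eps a m *: e (gGs b m) + eps a b *: e (gGs m m)))
  | gG a, gHa b => Some (- \sum_(m < 2) (eps a m *: e (gPs b m) + eps a b *: e (gPs m m)))
  | gH, gJa a => Some (\sum_(m < 2) eps a m *: e (gHa m))
  | gH, gGs a b => Some (- \sum_(m < 2) (eps m a *: e (gPs b m) + eps m b *: e (gPs a m)))
  | gP a, gJa b => Some (- \sum_(m < 2) (eps a m *: e (gPs b m) + eps a b *: e (gPs m m)))
  | gJa a, gJa b => Some (eps a b *: e gJ)
  | gJa a, gGs b c => Some (\sum_(m < 2) (delta a b * eps c m + delta a c * eps b m) *: e (gG m))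
  | gJa a, gHa b => Some (eps a b *: e gH)
  | gJa a, gPs b c => Some (\sum_(m < 2) (delta a b * eps c m + delta a c * eps b m) *: e (gP m))
  | gGs a b, gHa c => Some (- \sum_(m < 2) (delta c a * eps b m + delta c b * eps a m) *: e (gP m))
  | gGs a b, gGs c d => Some (epsdel a b c d *: e gHs)
  | gPs a b, gGs c d => Some (epsdel a b c d *: e gJs)
  | gP a, gGs b c => Some (eps a b *: e (gJsa c) + eps a c *: e (gJsa b))
  | gG a, gGs b c => Some (eps a b *: e (gHsa c) + eps a c *: e (gHsa b))
  | gG a, gPs b c => Some (eps a b *: e (gJsa c) + eps a c *: e (gJsa b))
  | gJ, gHsa a => Some (\sum_(m < 2) eps a m *: e (gHsa m))
  | gJ, gJsa a => Some (\sum_(m < 2) eps a m *: e (gJsa m))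
  | gH, gHsa a => Some (\sum_(m < 2) eps a m *: e (gJsa m))
  | gJa a, gJs => Some (- \sum_(m < 2) eps a m *: e (gJsa m))
  | gJa a, gHs => Some (- \sum_(m < 2) eps a m *: e (gHsa m))
  | gJa a, gJsa b => Some (eps a b *: e gJs)
  | gJa a, gHsa b => Some (eps a b *: e gHs)
  | gHa a, gHs => Some (- \sum_(m < 2) eps a m *: e (gJsa m))
  | gHa a, gHsa b => Some (eps a b *: e gJs)
  | _, _ => None
  end.

Definition br : 'rV[R]_22 -> 'rV[R]_22 -> 'rV[R]_22 :=
  bil (fun i j => antisym_ext tbl (dec i) (dec j)).

Definition mtbl (x y : gen) : option R :=
  match x, y with
  | gP a, gG b => Some (delta a b)
  | gPs a b, gGs c d =>
      Some (delta a c * delta d b + delta a d * delta c b - 2 / 3 * delta a b * delta c d)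
  | gH, gHs => Some 1
  | gJ, gJs => Some 1
  | gHa a, gHsa b => Some (delta a b)
  | gJa a, gJsa b => Some (delta a b)
  | _, _ => None
  end.

Definition met : 'rV[R]_22 -> 'rV[R]_22 -> R :=
  bilf (fun i j => sym_ext mtbl (dec i) (dec j)).

Definition ee (g : egen) : 'rV[R]_8 := delta_mx 0 (eidx g).

Definition etbl (x y : egen) : option 'rV[R]_8 :=
  match x, y with
  | eJ, eG a => Some (\sum_(m < 2) eps a m *: ee (eG m))
  | eJ, eP a => Some (\sum_(m < 2) eps a m *: ee (eP m))
  | eG a, eG b => Some (eps a b *: ee eHs)
  | eG a, eH => Some (- \sum_(m < 2) eps a m *: ee (eP m))
  | eG a, eP b => Some (eps a b *: ee eJs)
  | _, _ => None
  end.

Definition ebr : 'rV[R]_8 -> 'rV[R]_8 -> 'rV[R]_8 :=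
  bil (fun i j => antisym_ext etbl (edec i) (edec j)).

Definition EBsub : {vspace 'rV[R]_22} :=
  <<[:: e gH; e gJ; e (gP ord0); e (gP (i2 1)); e (gG ord0); e (gG (i2 1));
        e gHs; e gJs]>>%VS.

Definition is_lie_bracket n (b : 'rV[R]_n -> 'rV[R]_n -> 'rV[R]_n) : Prop :=
  [/\ (forall (a : R) x y z, b (a *: x + y) z = a *: b x z + b y z),
      (forall (a : R) x y z, b x (a *: y + z) = a *: b x y + b x z),
      (forall x, b x x = 0) &
      (forall x y z, b x (b y z) + b y (b z x) + b z (b x y) = 0)].

Definition is_invariant_metric n (b : 'rV[R]_n -> 'rV[R]_n -> 'rV[R]_n)
    (g : 'rV[R]_n -> 'rV[R]_n -> R) : Prop :=
  [/\ (forall (a : R) x y z, g (a *: x + y) z = a * g x z + g y z),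
      (forall x y, g x y = g y x),
      (forall x, (forall y, g x y = 0) -> x = 0) &
      (forall x y z, g (b z x) y + g x (b z y) = 0)].

Definition is_subalgebra n (b : 'rV[R]_n -> 'rV[R]_n -> 'rV[R]_n) (S : {vspace 'rV[R]_n}) :=
  forall x y, x \in S -> y \in S -> b x y \in S.

Definition lie_iso_onto m n (b1 : 'rV[R]_m -> 'rV[R]_m -> 'rV[R]_m)
    (b2 : 'rV[R]_n -> 'rV[R]_n -> 'rV[R]_n) (S : {vspace 'rV[R]_n})
    (f : 'rV[R]_m -> 'rV[R]_n) : Prop :=
  [/\ (forall (a : R) x y, f (a *: x + y) = a *: f x + f y),
      injective f,
      (forall x, f x \in S),
      (forall s, s \in S -> exists x, f x = s) &
      (forall x y, f (b1 x y) = b2 (f x) (f y))].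

End Algebra.

(* The bracket and the metric are bilinear extensions of tables on basis
   vectors, so antisymmetry, the Jacobi identity and invariance reduce to
   identities between the integer structure constants (the metric scaled by 3),
   which are checked by computation; nondegeneracy follows from an explicit
   inverse of the Gram matrix up to the factor 12.  The Extended Bargmann
   algebra embeds by sending each of its basis vectors to its namesake: the
   Bargmann table is the restriction of the big table, so this coordinate
   embedding is a homomorphism onto span{H, J, P_a, G_a, H^*, J^*}. *)

From HB Require Import structures.
From mathcomp Require Import all_boot all_order all_algebra.
From mathcomp Require Import ring.
Set Implicit Arguments. Unset Strict Implicit. Unset Printing Implicit Defensive.
Import Order.TTheory GRing.Theory Num.Theory.
Local Open Scope ring_scope.

Section BilinearFromBasis.
Variables (R : realFieldType) (n : nat).
Implicit Types (x y z : 'rV[R]_n) (a : R).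

Section Bracket.
Variable f : 'I_n -> 'I_n -> 'rV[R]_n.

Lemma bilE x y l : bil f x y 0 l = \sum_i \sum_j x 0 i * y 0 j * f i j 0 l.
Proof.
rewrite /bil summxE; apply: eq_bigr => i _.
by rewrite summxE; apply: eq_bigr => j _; rewrite mxE.
Qed.

Lemma bil_linearl a x y z : bil f (a *: x + y) z = a *: bil f x z + bil f y z.
Proof.
apply/rowP => l; rewrite !mxE !bilE mulr_sumr -big_split /=; apply: eq_bigr => i _.
rewrite mulr_sumr -big_split /=; apply: eq_bigr => j _; rewrite !mxE; ring.
Qed.

Lemma bil_linearr a x y z : bil f x (a *: y + z) = a *: bil f x y + bil f x z.
Proof.
apply/rowP => l; rewrite !mxE !bilE mulr_sumr -big_split /=; apply: eq_bigr => i _.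
rewrite mulr_sumr -big_split /=; apply: eq_bigr => j _; rewrite !mxE; ring.
Qed.

Lemma bil_alt : (forall i j, f i j = - f j i) -> forall x, bil f x x = 0.
Proof.
move=> f_anti x; apply/rowP => l; rewrite bilE mxE.
set S := \sum_i _.
have S_opp : S = - S.
  rewrite {1}/S exchange_big -sumrN; apply: eq_bigr => i _.
  rewrite -sumrN; apply: eq_bigr => j _; rewrite f_anti mxE; ring.
have : 2%:R * S == 0 by rewrite mulr2n mulrDl mul1r {1}S_opp addNr.
by rewrite mulf_eq0 pnatr_eq0 => /eqP.
Qed.

Lemma bil_nestedE x y z l :
  bil f x (bil f y z) 0 l =
  \sum_i \sum_j \sum_k x 0 i * y 0 j * z 0 k * \sum_m f j k 0 m * f i m 0 l.
Proof.
rewrite bilE; apply: eq_bigr => i _.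
transitivity (\sum_m \sum_j \sum_k x 0 i * y 0 j * z 0 k * (f j k 0 m * f i m 0 l)).
  apply: eq_bigr => m _; rewrite bilE mulr_sumr mulr_suml; apply: eq_bigr => j _.
  rewrite mulr_sumr mulr_suml; apply: eq_bigr => k _; ring.
rewrite exchange_big; apply: eq_bigr => j _.
by rewrite exchange_big; apply: eq_bigr => k _; rewrite mulr_sumr.
Qed.

Lemma bil_jacobi :
  (forall i j k l, \sum_m f j k 0 m * f i m 0 l + \sum_m f k i 0 m * f j m 0 l
                   + \sum_m f i j 0 m * f k m 0 l = 0) ->
  forall x y z, bil f x (bil f y z) + bil f y (bil f z x) + bil f z (bil f x y) = 0.
Proof.
move=> jac x y z; apply/rowP => l; rewrite !mxE !bil_nestedE.
have cycle1 (F : 'I_n -> 'I_n -> 'I_n -> R) :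
    \sum_a \sum_b \sum_c F a b c = \sum_c \sum_a \sum_b F a b c.
  by under eq_bigr do rewrite exchange_big; rewrite exchange_big.
have cycle2 (F : 'I_n -> 'I_n -> 'I_n -> R) :
    \sum_a \sum_b \sum_c F a b c = \sum_b \sum_c \sum_a F a b c.
  by rewrite exchange_big; under eq_bigr do rewrite exchange_big.
rewrite [X in _ + X + _]cycle1 [X in _ + _ + X]cycle2 -!big_split /=; apply: big1 => i _.
rewrite -!big_split /=; apply: big1 => j _; rewrite -!big_split /=; apply: big1 => k _.
transitivity (x 0 i * y 0 j * z 0 k * (\sum_m f j k 0 m * f i m 0 l
  + \sum_m f k i 0 m * f j m 0 l + \sum_m f i j 0 m * f k m 0 l)); first ring.
by rewrite jac mulr0.
Qed.

End Bracket.

Section Form.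
Variable g : 'I_n -> 'I_n -> R.

Lemma bilf_linearl a x y z : bilf g (a *: x + y) z = a * bilf g x z + bilf g y z.
Proof.
rewrite /bilf mulr_sumr -big_split /=; apply: eq_bigr => i _.
rewrite mulr_sumr -big_split /=; apply: eq_bigr => j _; rewrite !mxE; ring.
Qed.

Lemma bilf_sym : (forall i j, g i j = g j i) -> forall x y, bilf g x y = bilf g y x.
Proof.
move=> g_sym x y; rewrite /bilf exchange_big; apply: eq_bigr => i _.
by apply: eq_bigr => j _; rewrite g_sym; ring.
Qed.

Lemma bilf_invariant (f : 'I_n -> 'I_n -> 'rV[R]_n) :
  (forall i j k, \sum_q f k i 0 q * g q j + \sum_q g i q * f k j 0 q = 0) ->
  forall x y z, bilf g (bil f z x) y + bilf g x (bil f z y) = 0.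
Proof.
move=> inv x y z.
have -> : bilf g (bil f z x) y =
    \sum_i \sum_j \sum_k \sum_q x 0 i * y 0 j * z 0 k * (f k i 0 q * g q j).
  rewrite /bilf.
  transitivity (\sum_q \sum_j \sum_k \sum_i x 0 i * y 0 j * z 0 k * (f k i 0 q * g q j)).
    apply: eq_bigr => q _; apply: eq_bigr => j _; rewrite bilE !mulr_suml.
    apply: eq_bigr => k _; rewrite !mulr_suml; apply: eq_bigr => i _; ring.
  rewrite exchange_big; under eq_bigr do rewrite exchange_big.
  under eq_bigr do under eq_bigr do rewrite exchange_big.
  by under eq_bigr do rewrite exchange_big; rewrite exchange_big.
have -> : bilf g x (bil f z y) =
    \sum_i \sum_j \sum_k \sum_q x 0 i * y 0 j * z 0 k * (g i q * f k j 0 q).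
  rewrite /bilf.
  transitivity (\sum_i \sum_q \sum_k \sum_j x 0 i * y 0 j * z 0 k * (g i q * f k j 0 q)).
    apply: eq_bigr => i _; apply: eq_bigr => q _; rewrite bilE mulr_sumr !mulr_suml.
    apply: eq_bigr => k _; rewrite mulr_sumr !mulr_suml; apply: eq_bigr => j _; ring.
  apply: eq_bigr => i _; rewrite exchange_big; under eq_bigr do rewrite exchange_big.
  by rewrite exchange_big.
rewrite -big_split /=; apply: big1 => i _; rewrite -big_split /=; apply: big1 => j _.
rewrite -big_split /=; apply: big1 => k _; rewrite -big_split /=.
transitivity (x 0 i * y 0 j * z 0 k *
  (\sum_q f k i 0 q * g q j + \sum_q g i q * f k j 0 q)).
  by rewrite mulrDr !mulr_sumr -big_split /=.
by rewrite inv mulr0.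
Qed.

Lemma bilf_nondeg (d : R) (W : 'I_n -> 'I_n -> R) : d != 0 ->
  (forall i0 i, \sum_j g i j * W i0 j = d * (i == i0)%:R) ->
  forall x, (forall y, bilf g x y = 0) -> x = 0.
Proof.
move=> d_neq0 gW x x_orth; apply/rowP => i0; rewrite mxE.
have pairW : bilf g x (\row_j W i0 j) = d * x 0 i0.
  transitivity (\sum_i x 0 i * \sum_j g i j * W i0 j).
    rewrite /bilf; apply: eq_bigr => i _; rewrite mulr_sumr.
    by apply: eq_bigr => j _; rewrite mxE; ring.
  under eq_bigr do rewrite gW.
  rewrite (bigD1 i0) //= big1 ?addr0 => [|i /negbTE ->]; last by rewrite !mulr0.
  by rewrite eqxx mulr1 mulrC.
apply/eqP; move: (x_orth (\row_j W i0 j)); rewrite pairW => /eqP.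
by rewrite mulf_eq0 (negbTE d_neq0).
Qed.

End Form.
End BilinearFromBasis.

Definition o1 : 'I_2 := lift ord0 ord0.

Lemma big_ord2 (V : nmodType) (F : 'I_2 -> V) : \sum_(m < 2) F m = F ord0 + F o1.
Proof. by rewrite !big_ord_recl big_ord0 addr0. Qed.

Section FormalCombination.
Variable T : Type.

Definition zcomb := seq (int * T).
Definition zgen (c : int) (g : T) : zcomb := [:: (c, g)].
Definition zopp (l : zcomb) : zcomb := [seq (- p.1, p.2) | p <- l].
Definition zsum2 (F : 'I_2 -> zcomb) : zcomb := F ord0 ++ F o1.

Definition zantisym (t : T -> T -> option zcomb) (x y : T) : zcomb :=
  match t x y with
  | Some l => l
  | None => if t y x is Some l then zopp l else [::]
  end.

Definition zcoef (ix : T -> nat) (k : nat) (l : zcomb) : int :=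
  foldr (fun p acc => (if ix p.2 == k then p.1 else 0) + acc) 0 l.

Definition zstruct (dec : nat -> T) (ix : T -> nat) (t : T -> T -> option zcomb)
    (i j k : nat) : int :=
  zcoef ix k (zantisym t (dec i) (dec j)).

Variables (R : realFieldType) (n : nat) (idx : T -> 'I_n).

Definition zeval (l : zcomb) : 'rV[R]_n := \sum_(p <- l) p.1%:~R *: delta_mx 0 (idx p.2).

Lemma zeval_nil : zeval [::] = 0.
Proof. by rewrite /zeval big_nil. Qed.

Lemma zeval_cons c g l : zeval ((c, g) :: l) = c%:~R *: delta_mx 0 (idx g) + zeval l.
Proof. by rewrite /zeval big_cons. Qed.

Lemma zeval_cat l1 l2 : zeval (l1 ++ l2) = zeval l1 + zeval l2.
Proof. by rewrite /zeval big_cat. Qed.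

Lemma zeval_gen c g : zeval (zgen c g) = c%:~R *: delta_mx 0 (idx g).
Proof. by rewrite /zeval big_seq1. Qed.

Lemma zeval_opp l : zeval (zopp l) = - zeval l.
Proof.
rewrite /zeval big_map -sumrN; apply: eq_bigr => p _.
by rewrite intrN scaleNr.
Qed.

Lemma zeval_sum2 F : zeval (zsum2 F) = zeval (F ord0) + zeval (F o1).
Proof. exact: zeval_cat. Qed.

Lemma antisym_ext_zeval (t : T -> T -> option 'rV[R]_n) zt :
  (forall x y, t x y = omap zeval (zt x y)) ->
  forall x y, antisym_ext t x y = zeval (zantisym zt x y).
Proof.
move=> tE x y; rewrite /antisym_ext /zantisym !tE.
case: (zt x y) => //=; case: (zt y x) => [l|] //=; first by rewrite zeval_opp.
by rewrite zeval_nil.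
Qed.

Variables (ix : T -> nat) (dec : 'I_n -> T) (decN : nat -> T).
Hypotheses (idxE : forall g, nat_of_ord (idx g) = ix g) (decE : forall i, dec i = decN i).

Lemma zeval_row l : zeval l = \row_k (zcoef ix k l)%:~R.
Proof.
elim: l => [|[c g] l IHl]; apply/rowP => k; rewrite !mxE /zeval ?big_nil ?big_cons ?mxE //.
rewrite -/(zeval l) IHl !mxE /= intrD -idxE [k == _]eq_sym -val_eqE.
by case: eqP; rewrite ?mulr1 ?mulr0.
Qed.

Lemma antisym_ext_row (t : T -> T -> option 'rV[R]_n) zt :
    (forall x y, t x y = omap zeval (zt x y)) ->
  forall i j, antisym_ext t (dec i) (dec j) = \row_k (zstruct decN ix zt i j k)%:~R.
Proof. by move=> tE i j; rewrite (antisym_ext_zeval tE) zeval_row !decE. Qed.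

End FormalCombination.

(* keeps [/=] from unfolding the tables before the [zeval_*] rewrites *)
Arguments zgen {T} : simpl never.
Arguments zopp {T} : simpl never.
Arguments zsum2 {T} : simpl never.

Section FiniteChecks.

Definition allN n (P : nat -> bool) := all P (iota 0 n).

Lemma allNP n P : allN n P -> forall i, (i < n)%N -> P i.
Proof. by move/allP=> allP i lt_in; apply: allP; rewrite mem_iota. Qed.

Definition sumN n (F : nat -> int) := foldr (fun m acc => F m + acc) 0 (iota 0 n).

Lemma sumNE n F : sumN n F = \sum_(m < n) F m.
Proof.
rewrite /sumN -(big_mkord xpredT) /index_iota subn0.
by elim: (iota 0 n) => [|a s IHs] /=; rewrite ?big_nil ?big_cons ?IHs.
Qed.

Lemma eq_sumN n (F G : nat -> int) :
  (forall m, (m < n)%N -> F m = G m) -> sumN n F = sumN n G.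
Proof. by move=> FG; rewrite !sumNE; apply: eq_bigr => m _; apply: FG. Qed.

Variables (n : nat) (c : nat -> nat -> nat -> int) (g : nat -> nat -> int).

Definition antisymb :=
  allN n (fun i => allN n (fun j => allN n (fun k => c i j k == - c j i k))).

(* For speed, [c] is tabulated once and the Jacobi sums only run over the
   support of [c j k], [c k i], [c i j]. *)
Definition ctab := [seq [seq [seq c i j k | k <- iota 0 n] | j <- iota 0 n] | i <- iota 0 n].
Definition tab_at (t : seq (seq (seq int))) i j k := nth 0 (nth [::] (nth [::] t i) j) k.
Definition support (r : seq int) := [seq (m, nth 0 r m) | m <- iota 0 n & nth 0 r m != 0].
Definition sum_support (S : seq (nat * int)) (F : nat -> int) :=
  foldr (fun p acc => p.2 * F p.1 + acc) 0 S.

Definition jacobib := let t := ctab in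
  allN n (fun i => allN n (fun j => allN n (fun k =>
    let Sjk := support (nth [::] (nth [::] t j) k) in
    let Ski := support (nth [::] (nth [::] t k) i) in
    let Sij := support (nth [::] (nth [::] t i) j) in
    allN n (fun l =>
      sum_support Sjk (fun m => tab_at t i m l) + sum_support Ski (fun m => tab_at t j m l)
      + sum_support Sij (fun m => tab_at t k m l) == 0)))).

Definition symb := allN n (fun i => allN n (fun j => g i j == g j i)).

Definition invariantb := let t := ctab in
  allN n (fun i => allN n (fun j => allN n (fun k =>
    sumN n (fun q => tab_at t k i q * g q j) + sumN n (fun q => g i q * tab_at t k j q) == 0))).

Definition inverseb (W : nat -> nat -> int) (d : int) :=
  allN n (fun i0 => allN n (fun i => sumN n (fun j => g i j * W i0 j) == d * (i == i0)%:Z)).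

Lemma tab_atE i j k : (i < n)%N -> (j < n)%N -> (k < n)%N -> tab_at ctab i j k = c i j k.
Proof.
move=> lt_in lt_jn lt_kn; rewrite /tab_at /ctab.
by rewrite !(nth_map 0) ?size_iota ?nth_iota // (nth_map 0) ?size_iota // nth_iota.
Qed.

Lemma sum_supportE (r : seq int) (F : nat -> int) :
  sum_support (support r) F = sumN n (fun m => nth 0 r m * F m).
Proof.
rewrite /sumN /support /sum_support; elim: (iota 0 n) => [|a s IHs] //=.
by case: eqP => [->|_] /=; rewrite IHs // mul0r add0r.
Qed.

Lemma jacobibP : jacobib -> forall i j k l : 'I_n,
  sumN n (fun m => c j k m * c i m l) + sumN n (fun m => c k i m * c j m l)
  + sumN n (fun m => c i j m * c k m l) = 0.
Proof.
move=> jac i j k l; apply/eqP.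
move: (allNP (allNP (allNP (allNP jac (ltn_ord i)) (ltn_ord j)) (ltn_ord k)) (ltn_ord l)).
cbv beta zeta; rewrite !sum_supportE; congr (_ + _ + _ == _); apply: eq_sumN => m lt_mn;
  by rewrite -[nth 0 _ m]/(tab_at ctab _ _ m) !tab_atE.
Qed.

Lemma invariantbP : invariantb -> forall i j k : 'I_n,
  sumN n (fun q => c k i q * g q j) + sumN n (fun q => g i q * c k j q) = 0.
Proof.
move=> inv i j k; apply/eqP; move: (allNP (allNP (allNP inv (ltn_ord i)) (ltn_ord j)) (ltn_ord k)).
by cbv beta zeta; congr (_ + _ == _); apply: eq_sumN => q lt_qn; rewrite tab_atE.
Qed.

End FiniteChecks.

Section FromChecks.
Variables (R : realFieldType) (n : nat) (f : 'I_n -> 'I_n -> 'rV[R]_n).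
Variable c : nat -> nat -> nat -> int.
Hypothesis fE : forall i j, f i j = \row_k (c i j k)%:~R.

Lemma f_entry i j k : f i j 0 k = (c i j k)%:~R.
Proof. by rewrite fE mxE. Qed.

Lemma sumN_intr (F : nat -> int) : (sumN n F)%:~R = \sum_(m < n) (F m)%:~R :> R.
Proof. by rewrite sumNE rmorph_sum. Qed.

Lemma lie_bracket_of_checks : antisymb n c -> jacobib n c -> is_lie_bracket (bil f).
Proof.
move=> anti jac; split; [exact: bil_linearl | exact: bil_linearr | | ].
- apply: bil_alt => i j; rewrite !fE; apply/rowP => k; rewrite !mxE -intrN.
  by have /eqP -> := allNP (allNP (allNP anti (ltn_ord i)) (ltn_ord j)) (ltn_ord k).
- apply: bil_jacobi => i j k l.
  rewrite !(eq_bigr _ (fun m _ => congr2 *%R (f_entry _ _ m) (f_entry _ _ _))).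
  have /(congr1 (fun z : int => z%:~R : R)) := jacobibP jac i j k l.
  by rewrite !intrD !sumN_intr !(eq_bigr _ (fun m _ => intrM _ _ _)).
Qed.

Lemma invariant_metric_of_checks (g : 'I_n -> 'I_n -> R) (h : nat -> nat -> int) (s : R)
    (W : nat -> nat -> int) (d : int) :
  (forall i j, g i j = (h i j)%:~R * s) -> s != 0 -> d != 0 ->
  symb n h -> invariantb n c h -> inverseb n h W d -> is_invariant_metric (bil f) (bilf g).
Proof.
move=> gE s_neq0 d_neq0 sym inv Winv; split.
- exact: bilf_linearl.
- apply: bilf_sym => i j; rewrite !gE.
  by have /eqP -> := allNP (allNP sym (ltn_ord i)) (ltn_ord j).
- apply: (@bilf_nondeg _ _ _ (d%:~R * s) (fun i0 j => (W i0 j)%:~R)).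
    by rewrite mulf_neq0 ?intr_eq0.
  move=> i0 i; have /eqP/(congr1 (fun z : int => z%:~R : R)) :=
    allNP (allNP Winv (ltn_ord i0)) (ltn_ord i).
  rewrite sumN_intr intrM (eq_bigr _ (fun j _ => intrM _ _ _)) => sumW.
  transitivity ((\sum_(j < n) (h i j)%:~R * (W i0 j)%:~R) * s).
    by rewrite mulr_suml; apply: eq_bigr => j _; rewrite gE; ring.
  by rewrite sumW pmulrn mulrAC.
- apply: bilf_invariant => i j k.
  rewrite !(eq_bigr _ (fun q _ => congr2 *%R (f_entry _ _ q) (gE _ _))).
  rewrite !(eq_bigr _ (fun q _ => congr2 *%R (gE _ _) (f_entry _ _ q))).
  have /(congr1 (fun z : int => z%:~R : R)) := invariantbP inv i j k.
  rewrite intrD !sumN_intr !(eq_bigr _ (fun q _ => intrM _ _ _)) => sum0.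
  transitivity ((\sum_(q < n) (c k i q)%:~R * (h q j)%:~R
    + \sum_(q < n) (h i q)%:~R * (c k j q)%:~R) * s).
    by rewrite mulrDl !mulr_suml; congr (_ + _); apply: eq_bigr => q _; ring.
  by rewrite sum0 mul0r.
Qed.

End FromChecks.

Section Embedding.
Variables (R : realFieldType) (m n : nat) (sigma : 'I_m -> 'I_n).
Implicit Types x y : 'rV[R]_m.

Definition embed_mx : 'M[R]_(m, n) := \matrix_(k, l) (sigma k == l)%:R.

Lemma embed_mxE x l : (x *m embed_mx) 0 l = \sum_k x 0 k * (sigma k == l)%:R.
Proof. by rewrite mxE; apply: eq_bigr => k _; rewrite mxE. Qed.

Lemma delta_embed_mx k : delta_mx 0 k *m embed_mx = delta_mx 0 (sigma k) :> 'rV[R]_n.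
Proof. by apply/rowP => l; rewrite -rowE !mxE eq_sym. Qed.

Lemma embed_linear a x y :
  (a *: x + y) *m embed_mx = a *: (x *m embed_mx) + y *m embed_mx.
Proof. by rewrite mulmxDl scalemxAl. Qed.

Lemma embed_inj : injective sigma -> injective (fun x => x *m embed_mx).
Proof.
move=> sigma_inj x y exy; apply/rowP => k.
have := congr1 (fun v : 'rV[R]_n => v 0 (sigma k)) exy.
have pick_k z : \sum_j z 0 j * (sigma j == sigma k)%:R = z 0 k.
  rewrite (bigD1 k) //= eqxx mulr1 big1 ?addr0 // => j ne_jk.
  by rewrite (inj_eq sigma_inj) (negbTE ne_jk) mulr0.
by rewrite /= !embed_mxE !pick_k.
Qed.

Lemma embed_in_span (S : seq 'rV[R]_n) :
  (forall k, delta_mx 0 (sigma k) \in S) -> forall x, x *m embed_mx \in <<S>>%VS.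
Proof.
move=> S_sigma x; rewrite [x]row_sum_delta mulmx_suml; apply: rpred_sum => k _.
by rewrite -scalemxAl delta_embed_mx; apply/rpredZ/memv_span.
Qed.

Lemma embed_onto_span (S : seq 'rV[R]_n) :
    (forall s, s \in S -> exists k, s = delta_mx 0 (sigma k)) ->
  forall v, v \in <<S>>%VS -> exists x, x *m embed_mx = v.
Proof.
move=> S_sigma v vS; rewrite (coord_span (X := in_tuple S) vS).
apply: (big_ind (fun v => exists x, x *m embed_mx = v)).
- by exists 0; rewrite mul0mx.
- by move=> _ _ [x <-] [y <-]; exists (x + y); rewrite mulmxDl.
move=> t _; have [k ->] := S_sigma _ (mem_nth 0 (ltn_ord t)).
by exists (coord (in_tuple S) t v *: delta_mx 0 k); rewrite -scalemxAl delta_embed_mx.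
Qed.

Lemma sum_embed_coord (V : lmodType R) (X : 'I_m -> R) (G : 'I_n -> V) :
  \sum_a (\sum_k X k * (sigma k == a)%:R) *: G a = \sum_k X k *: G (sigma k).
Proof.
under eq_bigr do rewrite scaler_suml.
rewrite exchange_big; apply: eq_bigr => k _.
rewrite (bigD1 (sigma k)) //= eqxx mulr1 big1 ?addr0 // => a /negbTE ne_ka.
by rewrite eq_sym ne_ka mulr0 scale0r.
Qed.

Lemma bil_embed (f1 : 'I_m -> 'I_m -> 'rV[R]_m) (f2 : 'I_n -> 'I_n -> 'rV[R]_n) :
    (forall i j, f1 i j *m embed_mx = f2 (sigma i) (sigma j)) ->
  forall x y, bil f1 x y *m embed_mx = bil f2 (x *m embed_mx) (y *m embed_mx).
Proof.
move=> f12 x y.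
have -> : bil f2 (x *m embed_mx) (y *m embed_mx) =
    \sum_a (x *m embed_mx) 0 a *: \sum_b (y *m embed_mx) 0 b *: f2 a b.
  by apply: eq_bigr => a _; rewrite scaler_sumr; apply: eq_bigr => b _; rewrite scalerA.
under eq_bigr do rewrite (eq_bigr _ (fun b _ => congr2 _ (embed_mxE y b) erefl)) sum_embed_coord.
rewrite (eq_bigr _ (fun a _ => congr2 _ (embed_mxE x a) erefl)) sum_embed_coord.
rewrite /bil mulmx_suml; apply: eq_bigr => i _; rewrite mulmx_suml scaler_sumr.
by apply: eq_bigr => j _; rewrite -scalemxAl f12 scalerA.
Qed.

End Embedding.

Definition epsZ (a b : 'I_2) : int := if a == b then 0 else if a == ord0 then 1 else -1.
Definition deltaZ (a b : 'I_2) : int := (a == b)%:Z.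
Definition epsdelZ (a b c d : 'I_2) : int :=
  epsZ a c * deltaZ d b + epsZ a d * deltaZ c b + epsZ b c * deltaZ d a + epsZ b d * deltaZ c a.

Definition ztbl (x y : gen) : option (zcomb gen) :=
  match x, y with
  | gJ, gG a => Some (zsum2 (fun m => zgen (epsZ a m) (gG m)))
  | gJ, gP a => Some (zsum2 (fun m => zgen (epsZ a m) (gP m)))
  | gG a, gH => Some (zopp (zsum2 (fun m => zgen (epsZ a m) (gP m))))
  | gG a, gG b => Some (zgen (epsZ a b) gHs)
  | gP a, gG b => Some (zgen (epsZ a b) gJs)
  | gJ, gJa a => Some (zsum2 (fun m => zgen (epsZ a m) (gJa m)))
  | gJ, gGs a b =>
      Some (zopp (zsum2 (fun m => zgen (epsZ m a) (gGs b m) ++ zgen (epsZ m b) (gGs a m))))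
  | gJ, gHa a => Some (zsum2 (fun m => zgen (epsZ a m) (gHa m)))
  | gJ, gPs a b =>
      Some (zopp (zsum2 (fun m => zgen (epsZ m a) (gPs b m) ++ zgen (epsZ m b) (gPs a m))))
  | gG a, gJa b =>
      Some (zopp (zsum2 (fun m => zgen (epsZ a m) (gGs b m) ++ zgen (epsZ a b) (gGs m m))))
  | gG a, gHa b =>
      Some (zopp (zsum2 (fun m => zgen (epsZ a m) (gPs b m) ++ zgen (epsZ a b) (gPs m m))))
  | gH, gJa a => Some (zsum2 (fun m => zgen (epsZ a m) (gHa m)))
  | gH, gGs a b =>
      Some (zopp (zsum2 (fun m => zgen (epsZ m a) (gPs b m) ++ zgen (epsZ m b) (gPs a m))))
  | gP a, gJa b =>
      Some (zopp (zsum2 (fun m => zgen (epsZ a m) (gPs b m) ++ zgen (epsZ a b) (gPs m m))))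
  | gJa a, gJa b => Some (zgen (epsZ a b) gJ)
  | gJa a, gGs b c =>
      Some (zsum2 (fun m => zgen (deltaZ a b * epsZ c m + deltaZ a c * epsZ b m) (gG m)))
  | gJa a, gHa b => Some (zgen (epsZ a b) gH)
  | gJa a, gPs b c =>
      Some (zsum2 (fun m => zgen (deltaZ a b * epsZ c m + deltaZ a c * epsZ b m) (gP m)))
  | gGs a b, gHa c =>
      Some (zopp (zsum2 (fun m => zgen (deltaZ c a * epsZ b m + deltaZ c b * epsZ a m) (gP m))))
  | gGs a b, gGs c d => Some (zgen (epsdelZ a b c d) gHs)
  | gPs a b, gGs c d => Some (zgen (epsdelZ a b c d) gJs)
  | gP a, gGs b c => Some (zgen (epsZ a b) (gJsa c) ++ zgen (epsZ a c) (gJsa b))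
  | gG a, gGs b c => Some (zgen (epsZ a b) (gHsa c) ++ zgen (epsZ a c) (gHsa b))
  | gG a, gPs b c => Some (zgen (epsZ a b) (gJsa c) ++ zgen (epsZ a c) (gJsa b))
  | gJ, gHsa a => Some (zsum2 (fun m => zgen (epsZ a m) (gHsa m)))
  | gJ, gJsa a => Some (zsum2 (fun m => zgen (epsZ a m) (gJsa m)))
  | gH, gHsa a => Some (zsum2 (fun m => zgen (epsZ a m) (gJsa m)))
  | gJa a, gJs => Some (zopp (zsum2 (fun m => zgen (epsZ a m) (gJsa m))))
  | gJa a, gHs => Some (zopp (zsum2 (fun m => zgen (epsZ a m) (gHsa m))))
  | gJa a, gJsa b => Some (zgen (epsZ a b) gJs)
  | gJa a, gHsa b => Some (zgen (epsZ a b) gHs)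
  | gHa a, gHs => Some (zopp (zsum2 (fun m => zgen (epsZ a m) (gJsa m))))
  | gHa a, gHsa b => Some (zgen (epsZ a b) gJs)
  | _, _ => None
  end.

(* [dec], [idx] and [i2] go through [inord], which [vm_compute] evaluates very
   slowly; the computations below use these [nat] versions instead. *)
Definition i2N (k : nat) : 'I_2 := if k == 1%N then o1 else ord0.

Lemma i2E k : i2 k = i2N k.
Proof.
apply: val_inj; rewrite /i2 /i2N /=; case: (ltnP k 2) => [lt_k2|le2k].
  by rewrite inordK //; case: k lt_k2 => [|[|]].
by rewrite /inord /insubd insubN -?leqNgt //; case: k le2k => [|[|k]].
Qed.

Definition decN (k : nat) : gen :=
  if k == 0%N then gJ else if k == 1%N then gH
  else if (k < 4)%N then gG (i2N (k - 2))
  else if (k < 6)%N then gP (i2N (k - 4))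
  else if (k < 8)%N then gJa (i2N (k - 6))
  else if (k < 10)%N then gHa (i2N (k - 8))
  else if (k < 13)%N then gGs (i2N ((k - 10) %/ 2)) (i2N (minn (k - 10) 1))
  else if (k < 16)%N then gPs (i2N ((k - 13) %/ 2)) (i2N (minn (k - 13) 1))
  else if k == 16%N then gJs else if k == 17%N then gHs
  else if (k < 20)%N then gJsa (i2N (k - 18))
  else gHsa (i2N (k - 20)).

Lemma decE (i : 'I_22) : dec i = decN i.
Proof. by rewrite /dec /decN /symgen !i2E. Qed.

Definition idxN (g : gen) : nat :=
  match g with
  | gJ => 0 | gH => 1
  | gG a => 2 + a | gP a => 4 + a
  | gJa a => 6 + a | gHa a => 8 + a
  | gGs a b => 10 + symidx a b | gPs a b => 13 + symidx a b
  | gJs => 16 | gHs => 17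
  | gJsa a => 18 + a | gHsa a => 20 + a
  end.

Lemma idxE g : nat_of_ord (idx g) = idxN g.
Proof.
by case: g => [||a|a|a|a|a b|a b|||a|a] /=; rewrite inordK // ?/symidx;
  case: a => [[|[|]]] //=; try case: b => [[|[|]]].
Qed.

Definition cN : nat -> nat -> nat -> int := zstruct decN idxN ztbl.

Section RealTables.
Variable R : realFieldType.

Lemma epsE a b : eps R a b = (epsZ a b)%:~R.
Proof. by rewrite /eps /epsZ; case: eqP => //; case: eqP. Qed.

Lemma epsdelE a b c d : epsdel R a b c d = (epsdelZ a b c d)%:~R.
Proof. by rewrite /epsdel /epsdelZ !intrD !intrM !epsE. Qed.

Lemma tbl_zeval x y : tbl R x y = omap (zeval R (@idx)) (ztbl x y).
Proof.
case: x => [||a|a|a|a|a b|a b|||a|a]; case: y => [||c|c|c|c|c d|c d|||c|c] //=;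
  congr Some;
  by rewrite ?zeval_opp ?zeval_sum2 ?zeval_cat ?zeval_cons ?zeval_gen ?zeval_nil ?addr0
       ?big_ord2 ?intrD ?intrM -?epsE -?epsdelE.
Qed.

Lemma br_table i j : antisym_ext (tbl R) (dec i) (dec j) = \row_k (cN i j k)%:~R.
Proof. exact: (antisym_ext_row idxE decE tbl_zeval). Qed.

End RealTables.

Lemma cN_antisym : antisymb 22 cN.
Proof. by vm_compute. Qed.

Lemma cN_jacobi : jacobib 22 cN.
Proof. by vm_compute. Qed.

Lemma br_lie (R : realFieldType) : is_lie_bracket (@br R).
Proof. exact: lie_bracket_of_checks (@br_table R) cN_antisym cN_jacobi. Qed.

(* three times the metric, to clear the denominator of 2/3 *)
Definition zmtbl (x y : gen) : option int :=
  match x, y with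
  | gP a, gG b => Some (3 * deltaZ a b)
  | gPs a b, gGs c d =>
      Some (3 * (deltaZ a c * deltaZ d b + deltaZ a d * deltaZ c b) - 2 * (deltaZ a b * deltaZ c d))
  | gH, gHs => Some 3
  | gJ, gJs => Some 3
  | gHa a, gHsa b => Some (3 * deltaZ a b)
  | gJa a, gJsa b => Some (3 * deltaZ a b)
  | _, _ => None
  end.

Definition gram3 (x y : gen) : int :=
  match zmtbl x y with
  | Some v => v
  | None => if zmtbl y x is Some v then v else 0
  end.

Lemma sym_ext_mtbl (R : realFieldType) x y : sym_ext (mtbl R) x y = (gram3 x y)%:~R / 3.
Proof.
have mtblE : forall u v, mtbl R u v = omap (fun z : int => z%:~R / 3) (zmtbl u v).
  have three_neq0 : (3 : R) != 0 by rewrite pnatr_eq0.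
  case=> [||a|a|a|a|a b|a b|||a|a] [||c|c|c|c|c d|c d|||c|c] //=;
    by congr Some; rewrite ?intrB ?intrM; field.
rewrite /sym_ext /gram3 !mtblE.
by case: (zmtbl x y) => //=; case: (zmtbl y x) => //=; rewrite mul0r.
Qed.

Definition gN (i j : nat) : int := gram3 (decN i) (decN j).

(* Up to a permutation of the basis, [gN] is made of entries 3 pairing a
   generator with its dual, and of the block [[4,0,-2],[0,3,0],[-2,0,4]] pairing
   [P_ab] with [G_cd]; replacing 3 by 4 and -2 by 2 gives [gN_adj] with
   [gN gN_adj^T = 12]. *)
Definition gN_adj (i0 j : nat) : int :=
  match gN i0 j with
  | Posz 3 | Posz 4 => 4
  | Negz 1 => 2
  | _ => 0
  end.

Lemma gN_sym : symb 22 gN.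
Proof. by vm_compute. Qed.

Lemma gN_invariant : invariantb 22 cN gN.
Proof. by vm_compute. Qed.

Lemma gN_inverse : inverseb 22 gN gN_adj 12.
Proof. by vm_compute. Qed.

Lemma met_invariant (R : realFieldType) : is_invariant_metric (@br R) (@met R).
Proof.
have gE i j : sym_ext (mtbl R) (dec i) (dec j) = (gN i j)%:~R * 3^-1.
  by rewrite sym_ext_mtbl !decE.
have three_neq0 : (3^-1 : R) != 0 by rewrite invr_eq0 pnatr_eq0.
exact: (invariant_metric_of_checks (@br_table R) gE three_neq0 _
  gN_sym gN_invariant gN_inverse).
Qed.

Definition zetbl (x y : egen) : option (zcomb egen) :=
  match x, y with
  | eJ, eG a => Some (zsum2 (fun m => zgen (epsZ a m) (eG m)))
  | eJ, eP a => Some (zsum2 (fun m => zgen (epsZ a m) (eP m)))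
  | eG a, eG b => Some (zgen (epsZ a b) eHs)
  | eG a, eH => Some (zopp (zsum2 (fun m => zgen (epsZ a m) (eP m))))
  | eG a, eP b => Some (zgen (epsZ a b) eJs)
  | _, _ => None
  end.

Definition edecN (k : nat) : egen :=
  if k == 0%N then eJ else if k == 1%N then eH
  else if (k < 4)%N then eG (i2N (k - 2))
  else if (k < 6)%N then eP (i2N (k - 4))
  else if k == 6%N then eJs else eHs.

Lemma edecE (i : 'I_8) : edec i = edecN i.
Proof. by rewrite /edec /edecN !i2E. Qed.

Definition eidxN (g : egen) : nat :=
  match g with eJ => 0 | eH => 1 | eG a => 2 + a | eP a => 4 + a | eJs => 6 | eHs => 7 end.

Lemma eidxE g : nat_of_ord (eidx g) = eidxN g.
Proof. by case: g => [||a|a||] /=; rewrite inordK //; case: a => [[|[|]]]. Qed.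

Lemma etbl_zeval (R : realFieldType) x y : etbl R x y = omap (zeval R (@eidx)) (zetbl x y).
Proof.
case: x => [||a|a||]; case: y => [||c|c||] //=; congr Some;
  by rewrite ?zeval_opp ?zeval_sum2 ?zeval_gen ?big_ord2 -?epsE.
Qed.

Definition ecN : nat -> nat -> nat -> int := zstruct edecN eidxN zetbl.

Definition embg (g : egen) : gen :=
  match g with eJ => gJ | eH => gH | eG a => gG a | eP a => gP a | eJs => gJs | eHs => gHs end.

Definition bargmann_index (k : 'I_8) : 'I_22 := idx (embg (edec k)).
Definition bargmann_indexN (k : nat) : nat := idxN (embg (edecN k)).

Lemma bargmann_indexE k : nat_of_ord (bargmann_index k) = bargmann_indexN k.
Proof. by rewrite /bargmann_index idxE edecE. Qed.

Definition bargmann_gens := [:: gH; gJ; gP ord0; gP (i2N 1); gG ord0; gG (i2N 1); gHs; gJs].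

Lemma EBsubE (R : realFieldType) : EBsub R = <<map (e R) bargmann_gens>>%VS.
Proof. by rewrite /EBsub i2E. Qed.

Lemma bargmann_indexN_injb :
  allN 8 (fun k => allN 8 (fun k' => (bargmann_indexN k == bargmann_indexN k') ==> (k == k'))).
Proof. by vm_compute. Qed.

Lemma bargmann_indexN_listed : allN 8 (fun k => bargmann_indexN k \in map idxN bargmann_gens).
Proof. by vm_compute. Qed.

Lemma bargmann_gens_indexed :
  allN 8 (fun t => idxN (nth gJ bargmann_gens t) \in map bargmann_indexN (iota 0 8)).
Proof. by vm_compute. Qed.

Lemma bargmann_structb :
  allN 8 (fun i => allN 8 (fun j => allN 22 (fun l =>
    sumN 8 (fun k => ecN i j k * (bargmann_indexN k == l)%:Z)
    == cN (bargmann_indexN i) (bargmann_indexN j) l))).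
Proof. by vm_compute. Qed.

Lemma bargmann_index_injective : injective bargmann_index.
Proof.
move=> k k' /(congr1 (@nat_of_ord 22)); rewrite !bargmann_indexE => eqN.
apply/val_inj/eqP; move: (allNP (allNP bargmann_indexN_injb (ltn_ord k)) (ltn_ord k')).
by rewrite eqN eqxx.
Qed.

Section BargmannEmbedding.
Variable R : realFieldType.

Lemma bargmann_delta_in k : delta_mx 0 (bargmann_index k) \in map (e R) bargmann_gens.
Proof.
have := allNP bargmann_indexN_listed (ltn_ord k) => /= k_in.
pose t := index (bargmann_indexN k) (map idxN bargmann_gens).
have lt_t : (t < size bargmann_gens)%N by rewrite -(size_map idxN) index_mem.
have -> : bargmann_index k = idx (nth gJ bargmann_gens t).
  by apply: val_inj; rewrite /= bargmann_indexE idxE -(nth_map gJ 0%N) // nth_index.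
by rewrite -[delta_mx _ _]/(e R _) -(nth_map gJ 0) ?mem_nth ?size_map.
Qed.

Lemma bargmann_gens_hit s :
  s \in map (e R) bargmann_gens -> exists k, s = delta_mx 0 (bargmann_index k).
Proof.
move=> s_in; rewrite -(nth_index 0 s_in).
move: (index _ _) (index_mem s (map (e R) bargmann_gens)); rewrite s_in size_map => t lt_t8.
have [k] := mapP (allNP bargmann_gens_indexed lt_t8); rewrite mem_iota => /andP [_ lt_k8] gk.
exists (Ordinal lt_k8); rewrite (nth_map gJ) //; congr (delta_mx 0 _).
by apply: val_inj; rewrite /= bargmann_indexE -gk idxE.
Qed.

Lemma bargmann_table i j :
  antisym_ext (etbl R) (edec i) (edec j) *m embed_mx R bargmann_index
  = antisym_ext (tbl R) (dec (bargmann_index i)) (dec (bargmann_index j)).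
Proof.
rewrite br_table (antisym_ext_row eidxE edecE (@etbl_zeval R)).
apply/rowP => l; rewrite embed_mxE mxE !bargmann_indexE.
have /eqP/(congr1 (fun z : int => z%:~R : R)) :=
  allNP (allNP (allNP bargmann_structb (ltn_ord i)) (ltn_ord j)) (ltn_ord l).
rewrite sumN_intr => <-; apply: eq_bigr => k _.
by rewrite mxE intrM pmulrn -bargmann_indexE.
Qed.

End BargmannEmbedding.

Theorem mainTheorem10 (R : realFieldType) :
  [/\ is_lie_bracket (@br R),
      is_invariant_metric (@br R) (@met R),
      is_subalgebra (@br R) (@EBsub R) &
      exists f : 'rV[R]_8 -> 'rV[R]_22, lie_iso_onto (@ebr R) (@br R) (@EBsub R) f].
Proof.
pose f (x : 'rV[R]_8) : 'rV[R]_22 := x *m embed_mx R bargmann_index.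
have f_hom x y : f (ebr x y) = br (f x) (f y) := bil_embed (bargmann_table R) x y.
have f_in x : f x \in EBsub R.
  by rewrite EBsubE; exact: (embed_in_span (bargmann_delta_in R) x).
have f_onto s : s \in EBsub R -> exists x, f x = s.
  by rewrite EBsubE; exact: (embed_onto_span (@bargmann_gens_hit R)).
split; [exact: br_lie | exact: met_invariant | | ].
- by move=> x y /f_onto [x' <-] /f_onto [y' <-]; rewrite -f_hom.
- exists f; split => //; [exact: embed_linear | exact: embed_inj bargmann_index_injective].
Qed.
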